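(* If $G$ is a $2$-degenerate graph with maximum degree $\Delta(G) \ge 2$, then $\chi_s'(G) \le 6\Delta(G) - 7$.
   Context: All graphs are finite and simple. A graph is $2$-degenerate if every subgraph of it has a vertex of degree at most $2$. A strong edge coloring of $G$ is an assignment of colors to the edges of $G$ such that every path with three edges receives three distinct colors; equivalently, any two distinct edges that share an endpoint, or whose endpoints are joined by an edge, receive different colors. The strong chromatic index $\chi_s'(G)$ is the minimum number of colors in a strong edge coloring of $G$. *)

From mathcomp Require Import all_boot.
Set Implicit Arguments. Unset Strict Implicit. Unset Printing Implicit Defensive.

Definition simple_graph (T : finType) (e : rel T) : Prop :=
  symmetric e /\ irreflexive e.

Definition edges (T : finType) (e : rel T) : {set {set T}} :=
  [set [set p.1; p.2] | p in [set q : T * T | e q.1 q.2]].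

Definition degree (T : finType) (e : rel T) (v : T) : nat := #|[set u | e v u]|.

Definition max_degree (T : finType) (e : rel T) : nat := \max_(v : T) degree e v.

Definition two_degenerate (T : finType) (e : rel T) : Prop :=
  forall S : {set T}, S != set0 ->
    exists2 v, v \in S & #|[set u in S | e v u]| <= 2.

Definition edges_conflict (T : finType) (e : rel T) (f1 f2 : {set T}) : bool :=
  [exists x in f1, exists y in f2, (x == y) || e x y].

Definition strong_edge_coloring (T : finType) (e : rel T) (k : nat)
    (c : {set T} -> 'I_k) : Prop :=
  forall f1 f2, f1 \in edges e -> f2 \in edges e -> f1 != f2 ->
    edges_conflict e f1 f2 -> c f1 != c f2.

Definition strong_chromatic_index_le (T : finType) (e : rel T) (k : nat) : Prop :=
  exists c : {set T} -> 'I_k, @strong_edge_coloring T e k c.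

From mathcomp Require Import all_boot zify.

(* 1. A k-degenerate graph admits an injective ranking r of its vertices in
      which every vertex has at most k neighbours of higher rank (remove a
      vertex of small degree, rank it lowest, recurse).
   2. Orient every edge towards its higher-ranked endpoint.  For an edge uw
      with r u < r w, every edge conflicting with uw whose top endpoint is
      ranked at least as high as w lies in an explicit set [conflict_cover u w]
      of at most 6 Delta - 8 edges (with at most 2 up-neighbours per vertex).
   3. Hence every nonempty set of edges contains an edge (the one whose top
      endpoint has least rank) conflicting with at most 6 Delta - 8 others of
      the set, i.e. the conflict graph on the edges is (6 Delta - 8)-degenerate.
   4. A generic greedy colouring lemma then colours the conflict graph with
      6 Delta - 7 colours, which is the theorem. *)

Section DegenerateRanking.
Context {T : finType} {e : rel T} {k : nat}.

Hypothesis degenerate :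
  forall S : {set T}, S != set0 -> exists2 v, v \in S & #|[set u in S | e v u]| <= k.

Lemma degenerate_ranking_on (S : {set T}) :
  exists r : T -> nat, injective r /\
    forall v, v \in S -> #|[set u in S | e v u & r v < r u]| <= k.
Proof.
move: {2}#|S| (erefl #|S|) => n; elim: n S => [|n IH] S cardS.
  exists (fun x => enum_rank x : nat); split; first by move=> x y /val_inj/enum_rank_inj.
  by move=> v; move/eqP: cardS; rewrite cards_eq0 => /eqP ->; rewrite inE.
have S0 : S != set0 by apply/eqP => S0; rewrite S0 cards0 in cardS.
have [v vS small_v] := degenerate S S0.
have [|r [r_inj r_up]] := IH (S :\ v); first by move: cardS; rewrite (cardsD1 v) vS => -[].
exists (fun x => if x == v then 0 else (r x).+1); split.
  move=> x y /=; case: eqVneq => [->|_]; case: eqVneq => [->|_] //.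
  by move=> [/r_inj].
move=> x xS; case: (eqVneq x v) => [->|xv].
  apply: leq_trans small_v; apply: subset_leq_card; apply/subsetP => z.
  by rewrite !inE => /and3P[-> ->].
have xSv : x \in S :\ v by rewrite !inE xv.
apply: leq_trans (r_up x xSv); apply: eq_leq; apply: eq_card => z; rewrite !inE.
by case: (eqVneq z v) => [->|] /=; rewrite ?andbF.
Qed.

Lemma degenerate_ranking :
  exists r : T -> nat, injective r /\ forall v, #|[set u | e v u & r v < r u]| <= k.
Proof.
have [r [r_inj r_up]] := degenerate_ranking_on [set: T].
exists r; split => // v; have := r_up v (in_setT v).
by congr (_ <= _); apply: eq_card => z; rewrite !inE.
Qed.

End DegenerateRanking.

Lemma greedy_coloring {U : finType} (conf : rel U) (E : {set U}) (k : nat) :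
  0 < k -> symmetric conf ->
  (forall F : {set U}, F \subset E -> F != set0 ->
     exists2 f, f \in F & #|[set g in F | (g != f) && conf f g]| < k) ->
  exists c : U -> 'I_k, {in E &, forall f g, f != g -> conf f g -> c f != c g}.
Proof.
move=> k_gt0 conf_sym low.
suff: forall n (F : {set U}), #|F| = n -> F \subset E ->
    exists c : U -> 'I_k, {in F &, forall f g, f != g -> conf f g -> c f != c g}.
  by move/(_ _ E (erefl _) (subxx _)).
elim=> [|n IH] F cardF FE.
  exists (fun=> Ordinal k_gt0) => f g.
  by move/eqP: cardF; rewrite cards_eq0 => /eqP ->; rewrite inE.
have F0 : F != set0 by apply/eqP => F0; rewrite F0 cards0 in cardF.
have [f fF few_f] := low F FE F0.
pose N := [set g in F | (g != f) && conf f g].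
have [||c c_ok] := IH (F :\ f).
- by move: cardF; rewrite (cardsD1 f) fF => -[].
- exact: subset_trans (subsetDl F [set f]) FE.
have : ~~ ([set: 'I_k] \subset c @: N).
  apply/negP => /subset_leq_card; rewrite cardsT card_ord; apply/negP.
  by rewrite -ltnNge (leq_ltn_trans (leq_imset_card _ _)).
case/subsetPn => col _ col_free.
have col_ok g : g \in F -> g != f -> conf f g -> col != c g.
  move=> gF gf fg; apply: contraNneq col_free => ->.
  by apply: imset_f; rewrite inE gF gf.
exists (fun g => if g == f then col else c g) => g h gF hF.
case: (eqVneq g f) => [->|gf]; case: (eqVneq h f) => [->|hf] gh //=.
- exact: col_ok.
- by rewrite conf_sym eq_sym; apply: col_ok.
- by apply: c_ok; rewrite // !inE ?gf ?hf.
Qed.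

Definition star {T : finType} (X : {set T}) (Z : T -> {set T}) : {set {set T}} :=
  \bigcup_(x in X) [set [set x; z] | z in Z x].

Lemma mem_star {T : finType} {X : {set T}} {Z : T -> {set T}} {x z : T} :
  x \in X -> z \in Z x -> [set x; z] \in star X Z.
Proof. by move=> xX zZ; apply/bigcupP; exists x => //; apply: imset_f. Qed.

Lemma card_star {T : finType} {X : {set T}} {Z : T -> {set T}} {m : nat} :
  (forall x, x \in X -> #|Z x| <= m) -> #|star X Z| <= #|X| * m.
Proof.
move=> Zm; rewrite -sum_nat_const /star.
elim/big_rec2: _ => [|x n U xX IH]; first by rewrite cards0.
rewrite (leq_trans (leq_card_setU _ _)) // leq_add //.
exact: leq_trans (leq_imset_card _ _) (Zm x xX).
Qed.

Definition touch {T : finType} (e : rel T) (p q : T) : bool := (p == q) || e p q.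

Lemma exists_in_set2 {T : finType} (a b : T) (P : pred T) :
  [exists x in [set a; b], P x] = P a || P b.
Proof.
apply/existsP/orP => [[x /andP[/set2P[] -> Px]]|[Pa|Pb]]; [by left|by right| |].
- by exists a; rewrite set21.
- by exists b; rewrite set22.
Qed.

Lemma conflict_set2 {T : finType} (e : rel T) u w x y :
  edges_conflict e [set u; w] [set x; y] =
  [|| touch e u x, touch e u y, touch e w x | touch e w y].
Proof. by rewrite /edges_conflict !exists_in_set2 !orbA. Qed.

(* The count of Step 2: with a = #|down w|, b = #|up w|, c = #|down u| and
   d = #|up u|, the bound is extremal when b = d = 2. *)
Lemma cover_arith (a b c d m : nat) :
  a + b <= m -> c + d <= m -> b <= 2 -> d <= 2 -> 0 < a -> 0 < d -> 1 < m ->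
  (b + d - 1) * m + (a - 1) * 2 + c * 1 <= 6 * m - 8.
Proof. by move=> *; nia. Qed.

Section RankedGraph.
Context {T : finType} {e : rel T} {r : T -> nat}.
Hypotheses (e_sym : symmetric e) (e_irr : irreflexive e) (r_inj : injective r).

Definition nbhd v := [set z | e v z].
Definition up v := [set z | e v z & r v < r z].
Definition down v := [set z | e v z & r z < r v].

Hypothesis up_small : forall v, #|up v| <= 2.

Lemma card_nbhd v : #|nbhd v| <= max_degree e.
Proof. exact: (@leq_bigmax _ (degree e) v). Qed.

(* up v and down v are disjoint parts of the neighbourhood of v *)
Lemma card_up_down v : #|up v| + #|down v| <= max_degree e.
Proof.
rewrite -cardsUI; have -> : up v :&: down v = set0.
  by apply/setP => z; rewrite !inE; apply/negbTE; lia.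
rewrite cards0 addn0 (leq_trans _ (card_nbhd v)) // subset_leq_card //.
by apply/subsetP => z; rewrite !inE => /orP[] /andP[].
Qed.

Lemma conflict_sym : symmetric (edges_conflict e).
Proof.
suff conf_sym f g : edges_conflict e f g -> edges_conflict e g f.
  by move=> f g; apply/idP/idP; apply: conf_sym.
case/existsP => x /andP[xf /existsP[y /andP[yg xy]]].
apply/existsP; exists y; rewrite yg; apply/existsP; exists x.
by rewrite xf eq_sym e_sym.
Qed.

Lemma edge_oriented {g : {set T}} : g \in edges e ->
  exists x y, [/\ e x y, r x < r y & g = [set x; y]].
Proof.
case/imsetP => -[x y]; rewrite inE /= => xy ->.
case: (ltngtP (r x) (r y)) => [xy_r|yx_r|/r_inj xy_eq].
- by exists x, y.
- by exists y, x; rewrite e_sym setUC.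
- by rewrite xy_eq e_irr in xy.
Qed.

(* The edges that can conflict with uw (r u < r w) without having a top
   endpoint of lower rank than w: those through an up-neighbour of w or u,
   those leaving a down-neighbour of w upwards, and those leaving a
   down-neighbour of u upwards. *)
Definition conflict_cover u w : {set {set T}} :=
  star (up w :|: (up u :\ w)) nbhd
  :|: star (down w :\ u) up
  :|: star (down u) (fun x => up x :\ u).

Lemma conflict_cover_sub u w x y :
  e u w -> r u < r w -> e x y -> r x < r y -> r w <= r y ->
  [set x; y] != [set u; w] -> edges_conflict e [set u; w] [set x; y] ->
  [set x; y] \in conflict_cover u w.
Proof.
move=> uw ruw xy rxy rwy g_new; rewrite conflict_set2 /touch !in_setU.
pose Y := up w :|: (up u :\ w).
have inY v : (v \in Y) = (e w v && (r w < r v)) || [&& v != w, e u v & r u < r v].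
  by rewrite !inE.
have [yY|yY] := boolP (y \in Y).
  by rewrite [[set x; y]]setUC (mem_star yY) // inE e_sym.
have [xY|xY] := boolP (x \in Y); first by rewrite (mem_star xY) // inE.
case: (eqVneq y w) => [yw|yw].
  subst y; have xu : x != u by apply: contraNneq g_new => ->.
  have x_down : x \in down w :\ u by rewrite !inE xu [e w x]e_sym xy rxy.
  by rewrite (mem_star x_down) ?orbT // inE xy rxy.
have rwy_lt : r w < r y by rewrite ltn_neqAle rwy andbT; apply: contra yw => /eqP/r_inj ->.
(* y lies outside Y and above w, so it is adjacent to neither u nor w *)
have [wy uy] : ~~ e w y /\ ~~ e u y.
  by move: yY; rewrite inY rwy_lt (ltn_trans ruw rwy_lt) yw !andbT => /norP.
have yu : y != u by apply: contraTneq (ltn_trans ruw rwy_lt) => ->; rewrite ltnn.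
have [xu xw] : x != u /\ x != w by split; apply/eqP => xE; rewrite -xE xy in uy wy.
rewrite [u == y]eq_sym (negbTE yu) (negbTE uy) (negbTE wy) !orbF.
rewrite [u == x]eq_sym [w == x]eq_sym (negbTE xu) (negbTE xw) /= => /orP[ux|wx].
- (* x is a neighbour of u outside Y, hence below u *)
  have x_down : x \in down u.
    rewrite inE ux; case: (ltngtP (r x) (r u)) => [//|rux|/r_inj xuE].
    + by move: xY; rewrite inY xw ux rux orbT.
    + by rewrite xuE eqxx in xu.
  by rewrite (mem_star x_down) ?orbT // !inE yu xy rxy.
- (* x is a neighbour of w outside Y, hence below w *)
  have x_down : x \in down w :\ u.
    rewrite !inE xu wx; case: (ltngtP (r x) (r w)) => [//|rwx|/r_inj xwE].
    + by move: xY; rewrite inY wx rwx.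
    + by rewrite xwE eqxx in xw.
  by rewrite (mem_star x_down) ?orbT // inE xy rxy.
Qed.

Lemma card_conflict_cover {u w : T} :
  e u w -> r u < r w -> 2 <= max_degree e -> #|conflict_cover u w| <= 6 * max_degree e - 8.
Proof.
move=> uw ruw Delta2.
have u_down : u \in down w by rewrite inE e_sym uw.
have w_up : w \in up u by rewrite inE uw.
have up_u_gt0 : 0 < #|up u| by apply/card_gt0P; exists w.
have down_w_gt0 : 0 < #|down w| by apply/card_gt0P; exists u.
have cardY : #|up w :|: (up u :\ w)| <= #|up w| + (#|up u| - 1).
  rewrite (leq_trans (leq_card_setU _ _)) // leq_add2l.
  by rewrite [#|up u|](cardsD1 w) w_up add1n subn1.
have card_via_up : #|star (up w :|: (up u :\ w)) nbhd| <= (#|up w| + #|up u| - 1) * max_degree e.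
  rewrite (leq_trans (card_star (fun v _ => card_nbhd v))) // leq_mul2r.
  by rewrite (leq_trans cardY) ?orbT //; lia.
have card_from_down_w : #|star (down w :\ u) up| <= (#|down w| - 1) * 2.
  rewrite (leq_trans (card_star (fun v _ => up_small v))) // leq_mul2r.
  by rewrite [#|down w|](cardsD1 u) u_down add1n subn1 leqnn orbT.
have card_from_down_u : #|star (down u) (fun x => up x :\ u)| <= #|down u| * 1.
  apply: card_star => x; rewrite inE => /andP[ux rxu].
  have u_up : u \in up x by rewrite inE e_sym ux.
  by have := up_small x; rewrite (cardsD1 u) u_up; lia.
have cardU := leq_trans (leq_card_setU _ _)
  (leq_add (leq_trans (leq_card_setU _ _) (leq_add card_via_up card_from_down_w))
           card_from_down_u).
apply: leq_trans cardU _; apply: cover_arith => //.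
- by rewrite addnC card_up_down.
- by rewrite addnC card_up_down.
Qed.

Lemma low_conflict_edge {F : {set {set T}}} :
  2 <= max_degree e -> F \subset edges e -> F != set0 ->
  exists2 f, f \in F &
    #|[set g in F | (g != f) && edges_conflict e f g]| <= 6 * max_degree e - 8.
Proof.
move=> Delta2 FE /set0Pn[g0 g0F].
pose P := [set p : T * T | [&& e p.1 p.2, r p.1 < r p.2 & [set p.1; p.2] \in F]].
have [x0 [y0 [xy0 rxy0 g0E]]] := edge_oriented (subsetP FE g0 g0F).
have p0P : (x0, y0) \in P by rewrite inE /= xy0 rxy0 -g0E.
case: (arg_minnP (fun p => r p.2) p0P) => -[u w] uwP w_min.
have /[!inE] /= /and3P[uw ruw uwF] : (u, w) \in P := uwP.
exists [set u; w] => //.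
apply: leq_trans (subset_leq_card _) (card_conflict_cover uw ruw Delta2).
apply/subsetP => g; rewrite inE => /andP[gF /andP[g_new conf]].
have [x [y [xy rxy gE]]] := edge_oriented (subsetP FE g gF); subst g.
have xyP : (x, y) \in P by rewrite inE /= xy rxy gF.
by apply: conflict_cover_sub => //; exact: w_min xyP.
Qed.

End RankedGraph.

Theorem corollary2 (T : finType) (e : rel T) :
  simple_graph e -> two_degenerate e -> 2 <= max_degree e ->
  strong_chromatic_index_le e (6 * max_degree e - 7).
Proof.
move=> [e_sym e_irr] two_deg Delta2.
have [r [r_inj up_small]] := degenerate_ranking two_deg.
have [|||c c_ok] := @greedy_coloring _ (edges_conflict e) (edges e) (6 * max_degree e - 7).
- lia.
- exact: conflict_sym.
- move=> F FE F0.
  have [f fF few_f] := low_conflict_edge e_sym e_irr r_inj up_small Delta2 FE F0.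
  by exists f => //; rewrite (leq_ltn_trans few_f) //; lia.
- by exists c.
Qed.
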